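(* For every well-typed $\lambda^{dFG}$ expression $e$, all stores $\Sigma,\Sigma'$, heaps $\mu,\mu'$, labels $pc$, environments $\theta$ and values $v$ of $\lambda^{dFG}$: if $\langle\Sigma,\mu,e\rangle\Downarrow^{\theta}_{pc}\langle\Sigma',\mu',v\rangle$, then in the forcing semantics of $\lambda^{dCG}$, $\langle\langle\!\langle\Sigma\rangle\!\rangle,\langle\!\langle\mu\rangle\!\rangle,pc,\langle\!\langle e\rangle\!\rangle\rangle\Downarrow^{\langle\!\langle\theta\rangle\!\rangle}\langle\langle\!\langle\Sigma'\rangle\!\rangle,\langle\!\langle\mu'\rangle\!\rangle,pc,\langle\!\langle v\rangle\!\rangle\rangle$.
   Context: Labels form a lattice $(\mathcal{L},\sqsubseteq,\sqcup)$. Lists: $|X|$ length, $X[n]$ entry $n$ (from 0), $X[n\mapsto y]$ replacement (append if $n=|X|$). Source calculus $\lambda^{dFG}$: types $\mathbf{unit},\tau_1\to\tau_2,\tau_1+\tau_2,\tau_1\times\tau_2,\mathcal{L},\mathbf{Ref}\,s\,\tau$ ($s\in\{I,S\}$, standard simple typing); expressions $x,\lambda x.e,e_1e_2,(),\ell,(e_1,e_2),\mathbf{fst}(e),\mathbf{snd}(e),\mathbf{inl}(e),\mathbf{inr}(e),\mathbf{case}(e,x.e_1,x.e_2),\mathbf{getLabel},\mathbf{labelOf}(e),e_1\sqsubseteq^?e_2,\mathbf{taint}(e_1,e_2),\mathbf{new}(e),!e,e_1:=e_2,\mathbf{labelOfRef}(e)$; raw values $r::=()\mid(x.e,\theta)\mid\mathbf{inl}(v)\mid\mathbf{inr}(v)\mid(v_1,v_2)\mid\ell\mid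 n_\ell\mid n$; values $v::=r^\ell$; $r^\ell\sqcup\ell'=r^{\ell\sqcup\ell'}$; stores map labels to lists of raw values; heaps are lists of values. Evaluation $\langle\Sigma,\mu,e\rangle\Downarrow^\theta_{pc}\langle\Sigma',\mu',v\rangle$ (store/heap threaded left to right through premises; ''$e\Downarrow v$'' uses current $\theta,pc$): $x\Downarrow\theta(x)\sqcup pc$; $()\Downarrow()^{pc}$; $\ell\Downarrow\ell^{pc}$; $\lambda x.e\Downarrow(x.e,\theta)^{pc}$; $\mathbf{getLabel}\Downarrow pc^{pc}$; $e_1e_2\Downarrow v$ if $e_1\Downarrow(x.e,\theta')^\ell$, $e_2\Downarrow v_2$ and $e$ evaluates to $v$ in $\theta'[x\mapsto v_2]$ at $pc\sqcup\ell$; $\mathbf{inl}(e)\Downarrow\mathbf{inl}(v)^{pc}$, $\mathbf{inr}(e)\Downarrow\mathbf{inr}(v)^{pc}$ if $e\Downarrow v$; $\mathbf{case}(e,x.e_1,x.e_2)\Downarrow v$ if $e\Downarrow\mathbf{inl}(v_1)^\ell$ and $e_1$ gives $v$ in $\theta[x\mapsto v_1]$ at $pc\sqcup\ell$ (symmetric for $\mathbf{inr}$, $e_2$); $(e_1,e_2)\Downarrow(v_1,v_2)^{pc}$; if $e\Downarrow(v_1,v_2)^\ell$ then $\mathbf{fst}(e)\Downarrow v_1\sqcup\ell$, $\mathbf{snd}(e)\Downarrow v_2\sqcup\ell$; if $e\Downarrow r^\ell$ then $\mathbf{labelOf}(e)\Downarrow\ell^\ell$; if $e_1\Downarrow\ell_1^{\ell_1'}$,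 $e_2\Downarrow\ell_2^{\ell_2'}$ then $e_1\sqsubseteq^?e_2\Downarrow\mathbf{inl}(()^{pc})^{\ell_1'\sqcup\ell_2'}$ if $\ell_1\sqsubseteq\ell_2$ else $\mathbf{inr}(()^{pc})^{\ell_1'\sqcup\ell_2'}$; $\mathbf{taint}(e_1,e_2)\Downarrow v$ if $e_1\Downarrow\ell^{\ell'}$, $\ell'\sqsubseteq\ell$, and $e_2$ gives $v$ at program counter $\ell$. References of type $\mathbf{Ref}\,I$: $\mathbf{new}(e)\Downarrow(n_\ell)^{pc}$ if $e\Downarrow r^\ell$ with store $\Sigma'$, $n=|\Sigma'(\ell)|$, new store $\Sigma'[\ell\mapsto\Sigma'(\ell)[n\mapsto r]]$; $!e\Downarrow r^{\ell\sqcup\ell'}$ if $e\Downarrow(n_\ell)^{\ell'}$ with store $\Sigma'$ and $\Sigma'(\ell)[n]=r$; $e_1:=e_2\Downarrow()^{pc}$ if $e_1\Downarrow(n_\ell)^{\ell_1}$, $\ell_1\sqsubseteq\ell$, $e_2\Downarrow r^{\ell_2}$ with store $\Sigma''$, $\ell_2\sqsubseteq\ell$, new store $\Sigma''[\ell\mapsto\Sigma''(\ell)[n\mapsto r]]$; $\mathbf{labelOfRef}(e)\Downarrow\ell^{\ell\sqcup\ell'}$ if $e\Downarrow(n_\ell)^{\ell'}$. References of type $\mathbf{Ref}\,S$: $\mathbf{new}(e)\Downarrow n^{pc}$ if $e\Downarrow v$ with heap $\mu'$, $n=|\mu'|$, new heap $\mu'[n\mapsto v]$; $!e\Downarrow r^{\ell\sqcup\ell'}$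 if $e\Downarrow n^\ell$, heap entry $r^{\ell'}$ at $n$; $\mathbf{labelOfRef}(e)\Downarrow\ell_2^{\ell_1\sqcup\ell_2}$ if $e\Downarrow n^{\ell_1}$, heap entry $r^{\ell_2}$; $e_1:=e_2\Downarrow()^{pc}$ if $e_1\Downarrow n^\ell$, $e_2\Downarrow r_2^{\ell_2}$ with heap $\mu''$, $\mu''[n]=r_1^{\ell_1}$, $\ell\sqsubseteq\ell_1$, new heap $\mu''[n\mapsto r_2^{\ell_2\sqcup\ell}]$. Target calculus $\lambda^{dCG}$: types add $\mathbf{LIO}\,\tau$, $\mathbf{Labeled}\,\tau$; values $()\mid(x.e,\theta)\mid\mathbf{inl}(v)\mid\mathbf{inr}(v)\mid(v_1,v_2)\mid\ell\mid\mathbf{Labeled}\,\ell\,v\mid(t,\theta)\mid n_\ell\mid n$; expressions: the pure constructs $x,\lambda x.e,e_1e_2,(),\ell$, pairs, projections, injections, $\mathbf{case}$, $e_1\sqsubseteq^?e_2$, and thunks $t::=\mathbf{return}(e)\mid\mathbf{bind}(e,x.e)\mid\mathbf{unlabel}(e)\mid\mathbf{toLabeled}(e)\mid\mathbf{labelOf}(e)\mid\mathbf{getLabel}\mid\mathbf{taint}(e)\mid\mathbf{new}(e)\mid!e\mid e_1:=e_2\mid\mathbf{labelOfRef}(e)$; stores map labels to lists of values, heaps are lists of $\mathbf{Labeled}\,\ell\,v$. Pure semantics $e\Downarrow^\theta v$: standard call-by-value environment semantics ($x\Downarrow\theta(x)$, $\lambda x.e\Downarrow(x.e,\theta)$, thunk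 $t\Downarrow(t,\theta)$, application of function closures, componentwise pairs/injections/projections, case on injections binding $x$, $e_1\sqsubseteq^?e_2$ yields $\mathbf{inl}(())$ if the labels satisfy $\ell_1\sqsubseteq\ell_2$ else $\mathbf{inr}(())$). Forcing: $\langle\Sigma,\mu,pc,e\rangle\Downarrow^\theta c'$ iff $e\Downarrow^\theta(t,\theta')$ and $\langle\Sigma,\mu,pc,t\rangle\Downarrow^{\theta'}c'$. Thunk rules (state unchanged unless said): $\mathbf{return}(e)$ gives $v$ where $e\Downarrow v$; $\mathbf{bind}(e_1,x.e_2)$ forces $e_1$ to get $\langle\Sigma',\mu',pc',v_1\rangle$ then forces $e_2$ in $\theta[x\mapsto v_1]$ from that state; $\mathbf{toLabeled}(e)$: forcing $e$ gives $\langle\Sigma',\mu',pc',v\rangle$, result $\langle\Sigma',\mu',pc,\mathbf{Labeled}\,pc'\,v\rangle$; $\mathbf{unlabel}(e)$ with $e\Downarrow\mathbf{Labeled}\,\ell\,v$ gives $v$ with program counter $pc\sqcup\ell$; $\mathbf{labelOf}(e)$ with $e\Downarrow\mathbf{Labeled}\,\ell\,v$ gives $\ell$ with program counter $pc\sqcup\ell$; $\mathbf{getLabel}$ gives $pc$; $\mathbf{taint}(e)$ with $e\Downarrow\ell$ gives $()$ with program counter $pc\sqcup\ell$; $\mathbf{Ref}\,I$: $\mathbf{new}(e)$ with $e\Downarrow\mathbf{Labeled}\,\ell\,v$, $pc\sqsubseteq\ell$, $n=|\Sigma(\ell)|$ gives $n_\ell$ and store $\Sigma[\ell\mapsto\Sigma(\ell)[n\mapsto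 v]]$; $!e$ with $e\Downarrow n_\ell$ gives $\Sigma(\ell)[n]$ with pc $pc\sqcup\ell$; $e_1:=e_2$ with $e_1\Downarrow n_{\ell_1}$, $e_2\Downarrow\mathbf{Labeled}\,\ell_2\,v$, $\ell_2\sqsubseteq\ell_1$, $pc\sqsubseteq\ell_1$ gives $()$ and store $\Sigma[\ell_1\mapsto\Sigma(\ell_1)[n\mapsto v]]$; $\mathbf{labelOfRef}(e)$ with $e\Downarrow n_\ell$ gives $\ell$ with pc $pc\sqcup\ell$; $\mathbf{Ref}\,S$: $\mathbf{new}(e)$ with $e\Downarrow\mathbf{Labeled}\,\ell\,v$, $pc\sqsubseteq\ell$, $n=|\mu|$ gives $n$ and heap $\mu[n\mapsto\mathbf{Labeled}\,\ell\,v]$; $!e$ with $e\Downarrow n$, $\mu[n]=\mathbf{Labeled}\,\ell\,v$ gives $v$ with pc $pc\sqcup\ell$; $\mathbf{labelOfRef}(e)$ likewise gives $\ell$ with pc $pc\sqcup\ell$; $e_1:=e_2$ with $e_1\Downarrow n$, $e_2\Downarrow\mathbf{Labeled}\,\ell'\,v$, $\mu[n]=\mathbf{Labeled}\,\ell\,v_0$, $pc\sqsubseteq\ell$ gives $()$ and heap $\mu[n\mapsto\mathbf{Labeled}\,(pc\sqcup\ell')\,v]$. Translation $\langle\!\langle\cdot\rangle\!\rangle$. Notation: $y\leftarrow e_1;e_2$ means $\mathbf{bind}(e_1,y.e_2)$ and $e_1;e_2$ means $\mathbf{bind}(e_1,y.e_2)$ with $y$ fresh; $\mathbf{if}\,e\,\mathbf{then}\,e_1\,\mathbf{else}\,e_2$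 means $\mathbf{case}(e,\_.e_1,\_.e_2)$. Expressions: $\langle\!\langle()\rangle\!\rangle=\mathbf{toLabeled}(\mathbf{return}(()))$; $\langle\!\langle\ell\rangle\!\rangle=\mathbf{toLabeled}(\mathbf{return}(\ell))$; $\langle\!\langle\lambda x.e\rangle\!\rangle=\mathbf{toLabeled}(\mathbf{return}(\lambda x.\langle\!\langle e\rangle\!\rangle))$; $\langle\!\langle\mathbf{inl}(e)\rangle\!\rangle=\mathbf{toLabeled}(lv\leftarrow\langle\!\langle e\rangle\!\rangle;\mathbf{return}(\mathbf{inl}(lv)))$, same for $\mathbf{inr}$; $\langle\!\langle(e_1,e_2)\rangle\!\rangle=\mathbf{toLabeled}(lv_1\leftarrow\langle\!\langle e_1\rangle\!\rangle;lv_2\leftarrow\langle\!\langle e_2\rangle\!\rangle;\mathbf{return}((lv_1,lv_2)))$; $\langle\!\langle x\rangle\!\rangle=\mathbf{toLabeled}(\mathbf{unlabel}(x))$; $\langle\!\langle e_1e_2\rangle\!\rangle=\mathbf{toLabeled}(lv_1\leftarrow\langle\!\langle e_1\rangle\!\rangle;lv_2\leftarrow\langle\!\langle e_2\rangle\!\rangle;v_1\leftarrow\mathbf{unlabel}(lv_1);lv\leftarrow v_1\,lv_2;\mathbf{unlabel}(lv))$; $\langle\!\langle\mathbf{case}(e,x.e_1,x.e_2)\rangle\!\rangle=\mathbf{toLabeled}(lv\leftarrow\langle\!\langle e\rangle\!\rangle;v\leftarrow\mathbf{unlabel}(lv);lv'\leftarrow\mathbf{case}(v,x.\langle\!\langle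 e_1\rangle\!\rangle,x.\langle\!\langle e_2\rangle\!\rangle);\mathbf{unlabel}(lv'))$; $\langle\!\langle\mathbf{fst}(e)\rangle\!\rangle=\mathbf{toLabeled}(lv\leftarrow\langle\!\langle e\rangle\!\rangle;v\leftarrow\mathbf{unlabel}(lv);\mathbf{unlabel}(\mathbf{fst}(v)))$, same for $\mathbf{snd}$; $\langle\!\langle e_1\sqsubseteq^?e_2\rangle\!\rangle=\mathbf{toLabeled}(lv_1\leftarrow\langle\!\langle e_1\rangle\!\rangle;lv_2\leftarrow\langle\!\langle e_2\rangle\!\rangle;lu\leftarrow\mathbf{toLabeled}(\mathbf{return}(()));v_1\leftarrow\mathbf{unlabel}(lv_1);v_2\leftarrow\mathbf{unlabel}(lv_2);\mathbf{return}(\mathbf{if}\,v_1\sqsubseteq^?v_2\,\mathbf{then}\,\mathbf{inl}(lu)\,\mathbf{else}\,\mathbf{inr}(lu)))$; $\langle\!\langle\mathbf{taint}(e_1,e_2)\rangle\!\rangle=\mathbf{toLabeled}(lv_1\leftarrow\langle\!\langle e_1\rangle\!\rangle;v_1\leftarrow\mathbf{unlabel}(lv_1);\mathbf{taint}(v_1);lv_2\leftarrow\langle\!\langle e_2\rangle\!\rangle;\mathbf{unlabel}(lv_2))$; $\langle\!\langle\mathbf{labelOf}(e)\rangle\!\rangle=\mathbf{toLabeled}(lv\leftarrow\langle\!\langle e\rangle\!\rangle;\mathbf{labelOf}(lv))$; $\langle\!\langle\mathbf{getLabel}\rangle\!\rangle=\mathbf{toLabeled}(\mathbf{getLabel})$;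 $\langle\!\langle\mathbf{new}(e)\rangle\!\rangle=\mathbf{toLabeled}(lv\leftarrow\langle\!\langle e\rangle\!\rangle;\mathbf{new}(lv))$; $\langle\!\langle!e\rangle\!\rangle=\mathbf{toLabeled}(lr\leftarrow\langle\!\langle e\rangle\!\rangle;r\leftarrow\mathbf{unlabel}(lr);!r)$; $\langle\!\langle e_1:=e_2\rangle\!\rangle=\mathbf{toLabeled}(lr\leftarrow\langle\!\langle e_1\rangle\!\rangle;lv\leftarrow\langle\!\langle e_2\rangle\!\rangle;r\leftarrow\mathbf{unlabel}(lr);r:=lv);\mathbf{toLabeled}(\mathbf{return}(()))$; $\langle\!\langle\mathbf{labelOfRef}(e)\rangle\!\rangle=\mathbf{toLabeled}(lr\leftarrow\langle\!\langle e\rangle\!\rangle;r\leftarrow\mathbf{unlabel}(lr);\mathbf{labelOfRef}(r))$. Here every nested translated subexpression $\langle\!\langle e_i\rangle\!\rangle$ (and the nested $\mathbf{toLabeled}(\mathbf{return}(()))$) is evaluated in an environment from which the auxiliary variables $lv,lv_1,lv_2,lv',lu,lr,r,v,v_1,v_2$ introduced by the translation have been removed (formally via a weakening construct $\mathbf{wken}(\bar x,e)$ that evaluates $e$ in $\theta$ with $\bar x$ removed from its domain), so that closures never capture them. Values: $\langle\!\langle r^\ell\rangle\!\rangle=\mathbf{Labeled}\,\ell\,\langle\!\langle r\rangle\!\rangle$; $\langle\!\langle()\rangle\!\rangle=()$, $\langle\!\langle\ell\rangle\!\rangle=\ell$, pairs and injections homomorphically; $\langle\!\langle(x.e,\theta)\rangle\!\rangle=(x.\langle\!\langle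 e\rangle\!\rangle,\langle\!\langle\theta\rangle\!\rangle)$; $\langle\!\langle n_\ell\rangle\!\rangle=n_\ell$; $\langle\!\langle n\rangle\!\rangle=n$. Environments pointwise, $\langle\!\langle\theta\rangle\!\rangle(x)=\langle\!\langle\theta(x)\rangle\!\rangle$; stores pointwise on each memory, translating each raw value $r$ to $\langle\!\langle r\rangle\!\rangle$; heaps pointwise, $\langle\!\langle r^\ell:\mu\rangle\!\rangle=\langle\!\langle r^\ell\rangle\!\rangle:\langle\!\langle\mu\rangle\!\rangle$. *)

From HB Require Import structures.
From mathcomp Require Import all_boot all_order.
Set Implicit Arguments. Unset Strict Implicit. Unset Printing Implicit Defensive.

Fixpoint list_nth (A : Type) (X : list A) (n : nat) : option A :=
  match X, n with
  | [::], _ => None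
  | x :: _, 0 => Some x
  | _ :: X', n'.+1 => list_nth X' n'
  end.

(* X[n |-> y] : replacement of entry n, append if n = |X|; undefined (None)
   if n > |X| *)
Fixpoint list_set (A : Type) (X : list A) (n : nat) (y : A) : option (list A) :=
  match X, n with
  | [::], 0 => Some [:: y]
  | [::], _.+1 => None
  | _ :: X', 0 => Some (y :: X')
  | x :: X', n'.+1 => option_map (cons x) (list_set X' n' y)
  end.

Definition var := nat.

Inductive rkind := KI | KS.

Inductive ty :=
| TyUnit | TyFun (t1 t2 : ty) | TySum (t1 t2 : ty) | TyProd (t1 t2 : ty)
| TyLabel | TyRef (s : rkind) (t : ty).

(* auxiliary variables introduced by the translation (disjoint from source
   variables); Ay is the fresh variable of "e1; e2", Awild the "_" of if *)
Inductive aux := Alv | Alv1 | Alv2 | Alv' | Alu | Alr | Ar | Av | Av1 | Av2 | Ay | Awild.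

Definition aux_eq_dec (a b : aux) : {a = b} + {a <> b}.
Proof. decide equality. Defined.

Inductive tvar := TSrc (x : var) | TAux (a : aux).

Definition tvar_eqb (x y : tvar) : bool :=
  match x, y with
  | TSrc a, TSrc b => Nat.eqb a b
  | TAux a, TAux b => if aux_eq_dec a b then true else false
  | _, _ => false
  end.

Definition aux_vars : list tvar :=
  map TAux [:: Alv; Alv1; Alv2; Alv'; Alu; Alr; Ar; Av; Av1; Av2; Ay; Awild].

Section Lang.
Variables (d : Order.disp_t) (L : latticeType d).
Local Open Scope order_scope.

(* Source calculus lambda^dFG                                               *)

(* The reference operations carry the kind s of the reference type they
   operate on (determined by the typing derivation in the paper). *)
Inductive expr :=
| EVar (x : var)
| ELam (x : var) (e : expr)
| EApp (e1 e2 : expr)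
| EUnit
| ELab (l : L)
| EPair (e1 e2 : expr)
| EFst (e : expr)
| ESnd (e : expr)
| EInl (e : expr)
| EInr (e : expr)
| ECase (e : expr) (x : var) (e1 e2 : expr)
| EGetLabel
| ELabelOf (e : expr)
| ELeq (e1 e2 : expr)
| ETaint (e1 e2 : expr)
| ENew (s : rkind) (e : expr)
| ERead (s : rkind) (e : expr)
| EWrite (s : rkind) (e1 e2 : expr)
| ELabelOfRef (s : rkind) (e : expr).

Fixpoint lookup_ty (G : list (var * ty)) (x : var) : option ty :=
  match G with
  | [::] => None
  | (y, t) :: G' => if Nat.eqb x y then Some t else lookup_ty G' x
  end.

Inductive has_type : list (var * ty) -> expr -> ty -> Prop :=
| ty_var G x t : lookup_ty G x = Some t -> has_type G (EVar x) t
| ty_lam G x e t1 t2 :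
    has_type ((x, t1) :: G) e t2 -> has_type G (ELam x e) (TyFun t1 t2)
| ty_app G e1 e2 t1 t2 :
    has_type G e1 (TyFun t1 t2) -> has_type G e2 t1 -> has_type G (EApp e1 e2) t2
| ty_unit G : has_type G EUnit TyUnit
| ty_lab G l : has_type G (ELab l) TyLabel
| ty_pair G e1 e2 t1 t2 :
    has_type G e1 t1 -> has_type G e2 t2 -> has_type G (EPair e1 e2) (TyProd t1 t2)
| ty_fst G e t1 t2 : has_type G e (TyProd t1 t2) -> has_type G (EFst e) t1
| ty_snd G e t1 t2 : has_type G e (TyProd t1 t2) -> has_type G (ESnd e) t2
| ty_inl G e t1 t2 : has_type G e t1 -> has_type G (EInl e) (TySum t1 t2)
| ty_inr G e t1 t2 : has_type G e t2 -> has_type G (EInr e) (TySum t1 t2)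
| ty_case G e x e1 e2 t1 t2 t :
    has_type G e (TySum t1 t2) -> has_type ((x, t1) :: G) e1 t ->
    has_type ((x, t2) :: G) e2 t -> has_type G (ECase e x e1 e2) t
| ty_getlabel G : has_type G EGetLabel TyLabel
| ty_labelof G e t : has_type G e t -> has_type G (ELabelOf e) TyLabel
| ty_leq G e1 e2 :
    has_type G e1 TyLabel -> has_type G e2 TyLabel ->
    has_type G (ELeq e1 e2) (TySum TyUnit TyUnit)
| ty_taint G e1 e2 t :
    has_type G e1 TyLabel -> has_type G e2 t -> has_type G (ETaint e1 e2) t
| ty_new G s e t : has_type G e t -> has_type G (ENew s e) (TyRef s t)
| ty_read G s e t : has_type G e (TyRef s t) -> has_type G (ERead s e) t
| ty_write G s e1 e2 t :
    has_type G e1 (TyRef s t) -> has_type G e2 t -> has_type G (EWrite s e1 e2) TyUnit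
| ty_labelofref G s e t :
    has_type G e (TyRef s t) -> has_type G (ELabelOfRef s e) TyLabel.

Definition well_typed (e : expr) : Prop := exists G t, has_type G e t.

Inductive raw :=
| RUnit
| RClos (x : var) (e : expr) (th : env)
| RInl (v : value)
| RInr (v : value)
| RPair (v1 v2 : value)
| RLabel (l : L)
| RRefI (n : nat) (l : L)
| RRefS (n : nat)
with value := Val (r : raw) (l : L)
with env := ENil | ECons (x : var) (v : value) (th : env).

Fixpoint env_lookup (th : env) (x : var) : option value :=
  match th with
  | ENil => None
  | ECons y v th' => if Nat.eqb x y then Some v else env_lookup th' x
  end.

Definition vjoin (v : value) (l' : L) : value :=
  let: Val r l := v in Val r (l `|` l').

Definition store := L -> list raw.
Definition heap := list value.

Definition upd (A : Type) (S : L -> A) (l : L) (X : A) : L -> A :=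
  fun l' => if l' == l then X else S l'.

Inductive eval : store -> heap -> env -> L -> expr -> store -> heap -> value -> Prop :=
| ev_var S m th pc x v :
    env_lookup th x = Some v -> eval S m th pc (EVar x) S m (vjoin v pc)
| ev_unit S m th pc : eval S m th pc EUnit S m (Val RUnit pc)
| ev_lab S m th pc l : eval S m th pc (ELab l) S m (Val (RLabel l) pc)
| ev_lam S m th pc x e : eval S m th pc (ELam x e) S m (Val (RClos x e th) pc)
| ev_getlabel S m th pc : eval S m th pc EGetLabel S m (Val (RLabel pc) pc)
| ev_app S m th pc e1 e2 S1 m1 x e th' l S2 m2 v2 S3 m3 v :
    eval S m th pc e1 S1 m1 (Val (RClos x e th') l) ->
    eval S1 m1 th pc e2 S2 m2 v2 ->
    eval S2 m2 (ECons x v2 th') (pc `|` l) e S3 m3 v ->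
    eval S m th pc (EApp e1 e2) S3 m3 v
| ev_inl S m th pc e S' m' v :
    eval S m th pc e S' m' v -> eval S m th pc (EInl e) S' m' (Val (RInl v) pc)
| ev_inr S m th pc e S' m' v :
    eval S m th pc e S' m' v -> eval S m th pc (EInr e) S' m' (Val (RInr v) pc)
| ev_case_inl S m th pc e x e1 e2 S1 m1 v1 l S2 m2 v :
    eval S m th pc e S1 m1 (Val (RInl v1) l) ->
    eval S1 m1 (ECons x v1 th) (pc `|` l) e1 S2 m2 v ->
    eval S m th pc (ECase e x e1 e2) S2 m2 v
| ev_case_inr S m th pc e x e1 e2 S1 m1 v1 l S2 m2 v :
    eval S m th pc e S1 m1 (Val (RInr v1) l) ->
    eval S1 m1 (ECons x v1 th) (pc `|` l) e2 S2 m2 v ->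
    eval S m th pc (ECase e x e1 e2) S2 m2 v
| ev_pair S m th pc e1 e2 S1 m1 v1 S2 m2 v2 :
    eval S m th pc e1 S1 m1 v1 -> eval S1 m1 th pc e2 S2 m2 v2 ->
    eval S m th pc (EPair e1 e2) S2 m2 (Val (RPair v1 v2) pc)
| ev_fst S m th pc e S' m' v1 v2 l :
    eval S m th pc e S' m' (Val (RPair v1 v2) l) ->
    eval S m th pc (EFst e) S' m' (vjoin v1 l)
| ev_snd S m th pc e S' m' v1 v2 l :
    eval S m th pc e S' m' (Val (RPair v1 v2) l) ->
    eval S m th pc (ESnd e) S' m' (vjoin v2 l)
| ev_labelof S m th pc e S' m' r l :
    eval S m th pc e S' m' (Val r l) ->
    eval S m th pc (ELabelOf e) S' m' (Val (RLabel l) l)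
| ev_leq_true S m th pc e1 e2 S1 m1 l1 l1' S2 m2 l2 l2' :
    eval S m th pc e1 S1 m1 (Val (RLabel l1) l1') ->
    eval S1 m1 th pc e2 S2 m2 (Val (RLabel l2) l2') ->
    l1 <= l2 ->
    eval S m th pc (ELeq e1 e2) S2 m2 (Val (RInl (Val RUnit pc)) (l1' `|` l2'))
| ev_leq_false S m th pc e1 e2 S1 m1 l1 l1' S2 m2 l2 l2' :
    eval S m th pc e1 S1 m1 (Val (RLabel l1) l1') ->
    eval S1 m1 th pc e2 S2 m2 (Val (RLabel l2) l2') ->
    ~~ (l1 <= l2) ->
    eval S m th pc (ELeq e1 e2) S2 m2 (Val (RInr (Val RUnit pc)) (l1' `|` l2'))
| ev_taint S m th pc e1 e2 S1 m1 l l' S2 m2 v :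
    eval S m th pc e1 S1 m1 (Val (RLabel l) l') ->
    l' <= l ->
    eval S1 m1 th l e2 S2 m2 v ->
    eval S m th pc (ETaint e1 e2) S2 m2 v
| ev_newI S m th pc e S' m' r l n X :
    eval S m th pc e S' m' (Val r l) ->
    n = size (S' l) ->
    list_set (S' l) n r = Some X ->
    eval S m th pc (ENew KI e) (upd S' l X) m' (Val (RRefI n l) pc)
| ev_readI S m th pc e S' m' n l l' r :
    eval S m th pc e S' m' (Val (RRefI n l) l') ->
    list_nth (S' l) n = Some r ->
    eval S m th pc (ERead KI e) S' m' (Val r (l `|` l'))
| ev_writeI S m th pc e1 e2 S1 m1 n l l1 S2 m2 r l2 X :
    eval S m th pc e1 S1 m1 (Val (RRefI n l) l1) ->
    l1 <= l ->
    eval S1 m1 th pc e2 S2 m2 (Val r l2) ->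
    l2 <= l ->
    list_set (S2 l) n r = Some X ->
    eval S m th pc (EWrite KI e1 e2) (upd S2 l X) m2 (Val RUnit pc)
| ev_labelofrefI S m th pc e S' m' n l l' :
    eval S m th pc e S' m' (Val (RRefI n l) l') ->
    eval S m th pc (ELabelOfRef KI e) S' m' (Val (RLabel l) (l `|` l'))
| ev_newS S m th pc e S' m' v n m'' :
    eval S m th pc e S' m' v ->
    n = size m' ->
    list_set m' n v = Some m'' ->
    eval S m th pc (ENew KS e) S' m'' (Val (RRefS n) pc)
| ev_readS S m th pc e S' m' n l r l' :
    eval S m th pc e S' m' (Val (RRefS n) l) ->
    list_nth m' n = Some (Val r l') ->
    eval S m th pc (ERead KS e) S' m' (Val r (l `|` l'))
| ev_labelofrefS S m th pc e S' m' n l1 r l2 :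
    eval S m th pc e S' m' (Val (RRefS n) l1) ->
    list_nth m' n = Some (Val r l2) ->
    eval S m th pc (ELabelOfRef KS e) S' m' (Val (RLabel l2) (l1 `|` l2))
| ev_writeS S m th pc e1 e2 S1 m1 n l S2 m2 r2 l2 r1 l1 m3 :
    eval S m th pc e1 S1 m1 (Val (RRefS n) l) ->
    eval S1 m1 th pc e2 S2 m2 (Val r2 l2) ->
    list_nth m2 n = Some (Val r1 l1) ->
    l <= l1 ->
    list_set m2 n (Val r2 (l2 `|` l)) = Some m3 ->
    eval S m th pc (EWrite KS e1 e2) S2 m3 (Val RUnit pc).

(* Target calculus lambda^dCG                                               *)

Inductive texpr :=
| TVar (x : tvar)
| TLam (x : tvar) (e : texpr)
| TApp (e1 e2 : texpr)
| TUnit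
| TLab (l : L)
| TPair (e1 e2 : texpr)
| TFst (e : texpr)
| TSnd (e : texpr)
| TInl (e : texpr)
| TInr (e : texpr)
| TCase (e : texpr) (x : tvar) (e1 e2 : texpr)
| TLeq (e1 e2 : texpr)
| TWken (xs : list tvar) (e : texpr)   (* weakening: evaluate e without xs *)
| TThunk (t : tthunk)
with tthunk :=
| TReturn (e : texpr)
| TBind (e1 : texpr) (x : tvar) (e2 : texpr)
| TUnlabel (e : texpr)
| TToLabeled (e : texpr)
| TLabelOf (e : texpr)
| TGetLabel
| TTaint (e : texpr)
| TNew (s : rkind) (e : texpr)
| TRead (s : rkind) (e : texpr)
| TWrite (s : rkind) (e1 e2 : texpr)
| TLabelOfRef (s : rkind) (e : texpr).

Inductive tvalue :=
| TVUnit
| TVClos (x : tvar) (e : texpr) (th : tenv)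
| TVInl (v : tvalue)
| TVInr (v : tvalue)
| TVPair (v1 v2 : tvalue)
| TVLab (l : L)
| TVLabeled (l : L) (v : tvalue)
| TVThunk (t : tthunk) (th : tenv)
| TVRefI (n : nat) (l : L)
| TVRefS (n : nat)
with tenv := TENil | TECons (x : tvar) (v : tvalue) (th : tenv).

Fixpoint tenv_lookup (th : tenv) (x : tvar) : option tvalue :=
  match th with
  | TENil => None
  | TECons y v th' => if tvar_eqb x y then Some v else tenv_lookup th' x
  end.

Fixpoint tremove (xs : list tvar) (th : tenv) : tenv :=
  match th with
  | TENil => TENil
  | TECons y v th' =>
      if has (tvar_eqb y) xs then tremove xs th' else TECons y v (tremove xs th')
  end.

Definition tstore := L -> list tvalue.
Definition theap := list tvalue.

Inductive peval : tenv -> texpr -> tvalue -> Prop :=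
| pe_var th x v : tenv_lookup th x = Some v -> peval th (TVar x) v
| pe_lam th x e : peval th (TLam x e) (TVClos x e th)
| pe_app th e1 e2 x e th' v2 v :
    peval th e1 (TVClos x e th') -> peval th e2 v2 ->
    peval (TECons x v2 th') e v -> peval th (TApp e1 e2) v
| pe_unit th : peval th TUnit TVUnit
| pe_lab th l : peval th (TLab l) (TVLab l)
| pe_pair th e1 e2 v1 v2 :
    peval th e1 v1 -> peval th e2 v2 -> peval th (TPair e1 e2) (TVPair v1 v2)
| pe_fst th e v1 v2 : peval th e (TVPair v1 v2) -> peval th (TFst e) v1
| pe_snd th e v1 v2 : peval th e (TVPair v1 v2) -> peval th (TSnd e) v2
| pe_inl th e v : peval th e v -> peval th (TInl e) (TVInl v)
| pe_inr th e v : peval th e v -> peval th (TInr e) (TVInr v)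
| pe_case_inl th e x e1 e2 v1 v :
    peval th e (TVInl v1) -> peval (TECons x v1 th) e1 v ->
    peval th (TCase e x e1 e2) v
| pe_case_inr th e x e1 e2 v1 v :
    peval th e (TVInr v1) -> peval (TECons x v1 th) e2 v ->
    peval th (TCase e x e1 e2) v
| pe_leq_true th e1 e2 l1 l2 :
    peval th e1 (TVLab l1) -> peval th e2 (TVLab l2) -> l1 <= l2 ->
    peval th (TLeq e1 e2) (TVInl TVUnit)
| pe_leq_false th e1 e2 l1 l2 :
    peval th e1 (TVLab l1) -> peval th e2 (TVLab l2) -> ~~ (l1 <= l2) ->
    peval th (TLeq e1 e2) (TVInr TVUnit)
| pe_thunk th t : peval th (TThunk t) (TVThunk t th)
| pe_wken th xs e v : peval (tremove xs th) e v -> peval th (TWken xs e) v.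

Inductive force : tstore -> theap -> L -> tenv -> texpr ->
                  tstore -> theap -> L -> tvalue -> Prop :=
| force_intro S m pc th e t th' S' m' pc' v :
    peval th e (TVThunk t th') -> run S m pc th' t S' m' pc' v ->
    force S m pc th e S' m' pc' v
with run : tstore -> theap -> L -> tenv -> tthunk ->
           tstore -> theap -> L -> tvalue -> Prop :=
| run_return S m pc th e v :
    peval th e v -> run S m pc th (TReturn e) S m pc v
| run_bind S m pc th e1 x e2 S1 m1 pc1 v1 S2 m2 pc2 v :
    force S m pc th e1 S1 m1 pc1 v1 ->
    force S1 m1 pc1 (TECons x v1 th) e2 S2 m2 pc2 v ->
    run S m pc th (TBind e1 x e2) S2 m2 pc2 v
| run_tolabeled S m pc th e S' m' pc' v :
    force S m pc th e S' m' pc' v ->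
    run S m pc th (TToLabeled e) S' m' pc (TVLabeled pc' v)
| run_unlabel S m pc th e l v :
    peval th e (TVLabeled l v) -> run S m pc th (TUnlabel e) S m (pc `|` l) v
| run_labelof S m pc th e l v :
    peval th e (TVLabeled l v) -> run S m pc th (TLabelOf e) S m (pc `|` l) (TVLab l)
| run_getlabel S m pc th : run S m pc th TGetLabel S m pc (TVLab pc)
| run_taint S m pc th e l :
    peval th e (TVLab l) -> run S m pc th (TTaint e) S m (pc `|` l) TVUnit
| run_newI S m pc th e l v n X :
    peval th e (TVLabeled l v) -> pc <= l -> n = size (S l) ->
    list_set (S l) n v = Some X ->
    run S m pc th (TNew KI e) (upd S l X) m pc (TVRefI n l)
| run_readI S m pc th e n l v :
    peval th e (TVRefI n l) -> list_nth (S l) n = Some v ->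
    run S m pc th (TRead KI e) S m (pc `|` l) v
| run_writeI S m pc th e1 e2 n l1 l2 v X :
    peval th e1 (TVRefI n l1) -> peval th e2 (TVLabeled l2 v) ->
    l2 <= l1 -> pc <= l1 -> list_set (S l1) n v = Some X ->
    run S m pc th (TWrite KI e1 e2) (upd S l1 X) m pc TVUnit
| run_labelofrefI S m pc th e n l :
    peval th e (TVRefI n l) ->
    run S m pc th (TLabelOfRef KI e) S m (pc `|` l) (TVLab l)
| run_newS S m pc th e l v n m' :
    peval th e (TVLabeled l v) -> pc <= l -> n = size m ->
    list_set m n (TVLabeled l v) = Some m' ->
    run S m pc th (TNew KS e) S m' pc (TVRefS n)
| run_readS S m pc th e n l v :
    peval th e (TVRefS n) -> list_nth m n = Some (TVLabeled l v) ->
    run S m pc th (TRead KS e) S m (pc `|` l) v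
| run_labelofrefS S m pc th e n l v :
    peval th e (TVRefS n) -> list_nth m n = Some (TVLabeled l v) ->
    run S m pc th (TLabelOfRef KS e) S m (pc `|` l) (TVLab l)
| run_writeS S m pc th e1 e2 n l' v l v0 m' :
    peval th e1 (TVRefS n) -> peval th e2 (TVLabeled l' v) ->
    list_nth m n = Some (TVLabeled l v0) -> pc <= l ->
    list_set m n (TVLabeled (pc `|` l') v) = Some m' ->
    run S m pc th (TWrite KS e1 e2) S m' pc TVUnit.

(* Translation << . >>                                                       *)

Definition tv (a : aux) : texpr := TVar (TAux a).
Definition tl (e : texpr) : texpr := TThunk (TToLabeled e).
Definition ret (e : texpr) : texpr := TThunk (TReturn e).
Definition unl (e : texpr) : texpr := TThunk (TUnlabel e).
Definition bnd (e1 : texpr) (y : aux) (e2 : texpr) : texpr :=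
  TThunk (TBind e1 (TAux y) e2).
Definition seqc (e1 e2 : texpr) : texpr := bnd e1 Ay e2.
Definition tif (e e1 e2 : texpr) : texpr := TCase e (TAux Awild) e1 e2.
(* nested subexpressions are evaluated without the auxiliary variables *)
Definition W (e : texpr) : texpr := TWken aux_vars e.

Fixpoint trans (e : expr) : texpr :=
  match e with
  | EUnit => tl (ret TUnit)
  | ELab l => tl (ret (TLab l))
  | ELam x e => tl (ret (TLam (TSrc x) (trans e)))
  | EInl e => tl (bnd (W (trans e)) Alv (ret (TInl (tv Alv))))
  | EInr e => tl (bnd (W (trans e)) Alv (ret (TInr (tv Alv))))
  | EPair e1 e2 =>
      tl (bnd (W (trans e1)) Alv1 (bnd (W (trans e2)) Alv2
           (ret (TPair (tv Alv1) (tv Alv2)))))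
  | EVar x => tl (unl (TVar (TSrc x)))
  | EApp e1 e2 =>
      tl (bnd (W (trans e1)) Alv1 (bnd (W (trans e2)) Alv2
          (bnd (unl (tv Alv1)) Av1 (bnd (TApp (tv Av1) (tv Alv2)) Alv
          (unl (tv Alv))))))
  | ECase e x e1 e2 =>
      tl (bnd (W (trans e)) Alv (bnd (unl (tv Alv)) Av
          (bnd (TCase (tv Av) (TSrc x) (W (trans e1)) (W (trans e2))) Alv'
          (unl (tv Alv')))))
  | EFst e =>
      tl (bnd (W (trans e)) Alv (bnd (unl (tv Alv)) Av (unl (TFst (tv Av)))))
  | ESnd e =>
      tl (bnd (W (trans e)) Alv (bnd (unl (tv Alv)) Av (unl (TSnd (tv Av)))))
  | ELeq e1 e2 =>
      tl (bnd (W (trans e1)) Alv1 (bnd (W (trans e2)) Alv2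
          (bnd (W (tl (ret TUnit))) Alu
          (bnd (unl (tv Alv1)) Av1 (bnd (unl (tv Alv2)) Av2
          (ret (tif (TLeq (tv Av1) (tv Av2)) (TInl (tv Alu)) (TInr (tv Alu)))))))))
  | ETaint e1 e2 =>
      tl (bnd (W (trans e1)) Alv1 (bnd (unl (tv Alv1)) Av1
          (seqc (TThunk (TTaint (tv Av1)))
          (bnd (W (trans e2)) Alv2 (unl (tv Alv2))))))
  | ELabelOf e => tl (bnd (W (trans e)) Alv (TThunk (TLabelOf (tv Alv))))
  | EGetLabel => tl (TThunk TGetLabel)
  | ENew s e => tl (bnd (W (trans e)) Alv (TThunk (TNew s (tv Alv))))
  | ERead s e =>
      tl (bnd (W (trans e)) Alr (bnd (unl (tv Alr)) Ar (TThunk (TRead s (tv Ar)))))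
  | EWrite s e1 e2 =>
      seqc (tl (bnd (W (trans e1)) Alr (bnd (W (trans e2)) Alv
              (bnd (unl (tv Alr)) Ar (TThunk (TWrite s (tv Ar) (tv Alv)))))))
           (W (tl (ret TUnit)))
  | ELabelOfRef s e =>
      tl (bnd (W (trans e)) Alr (bnd (unl (tv Alr)) Ar
          (TThunk (TLabelOfRef s (tv Ar)))))
  end.

Fixpoint trans_raw (r : raw) : tvalue :=
  match r with
  | RUnit => TVUnit
  | RClos x e th => TVClos (TSrc x) (trans e) (trans_env th)
  | RInl v => TVInl (trans_val v)
  | RInr v => TVInr (trans_val v)
  | RPair v1 v2 => TVPair (trans_val v1) (trans_val v2)
  | RLabel l => TVLab l
  | RRefI n l => TVRefI n l
  | RRefS n => TVRefS n
  end
with trans_val (v : value) : tvalue :=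
  match v with Val r l => TVLabeled l (trans_raw r) end
with trans_env (th : env) : tenv :=
  match th with
  | ENil => TENil
  | ECons x v th' => TECons (TSrc x) (trans_val v) (trans_env th')
  end.

Definition trans_store (S : store) : tstore := fun l => map trans_raw (S l).
Definition trans_heap (m : heap) : theap := map trans_val m.

End Lang.

(* Inside each
   toLabeled block the program counter grows to pc joined with the labels of
   the values that were unlabelled; because source evaluation at pc only
   produces values labelled above pc (eval_pc_le_label), these joins are
   exactly the labels the source semantics computes. *)

From HB Require Import structures.
From mathcomp Require Import all_boot all_order.
From Stdlib Require Import FunctionalExtensionality.

Set Implicit Arguments. Unset Strict Implicit. Unset Printing Implicit Defensive.
Import Order.Theory.

Section ListUpdate.
Variables (A B : Type) (f : A -> B).

Lemma list_nth_map X n y :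
  list_nth X n = Some y -> list_nth (map f X) n = Some (f y).
Proof. by elim: X n => [|x X IH] [|n] //=; [case=> <- | exact: IH]. Qed.

Lemma list_set_map X n y X' :
  list_set X n y = Some X' -> list_set (map f X) n (f y) = Some (map f X').
Proof.
elim: X n X' => [|x X IH] [|n] X' //=; try by case=> <-.
by case E: (list_set X n y) => [Y|] //= [<-]; rewrite (IH _ _ E).
Qed.

End ListUpdate.

Section SourceLabels.
Variables (d : Order.disp_t) (L : latticeType d).
Local Open Scope order_scope.

Definition value_label (v : value L) : L := let: Val _ l := v in l.

Lemma eval_pc_le_label S m th pc e S' m' v :
  @eval d L S m th pc e S' m' v -> pc <= value_label v.
Proof.
elim=> //= {S m th pc e S' m' v}.
all: intros; repeat match goal with v : value _ |- _ => destruct v end => /=.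
all: try by [apply: lexUr | apply: lexUl].
all: by [eapply le_trans; [apply: leUl | eassumption]
        | eapply le_trans; [eapply le_trans|]; eassumption].
Qed.

End SourceLabels.

Section DerivedForcing.
Variables (d : Order.disp_t) (L : latticeType d).
Local Open Scope order_scope.
Implicit Types (S : tstore L) (m : theap L) (pc l : L) (th : tenv L) (v w : tvalue L).

Lemma force_run S m pc th t S' m' pc' v :
  run S m pc th t S' m' pc' v -> force S m pc th (TThunk t) S' m' pc' v.
Proof. by apply: force_intro; constructor. Qed.

Lemma force_tl S m pc th e S' m' pc' v :
  force S m pc th e S' m' pc' v -> force S m pc th (tl e) S' m' pc (TVLabeled pc' v).
Proof. by move=> He; apply/force_run/run_tolabeled. Qed.

Lemma force_ret S m pc th e v :
  peval th e v -> force S m pc th (ret e) S m pc v.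
Proof. by move=> He; apply/force_run/run_return. Qed.

Lemma force_unl S m pc th e l v :
  peval th e (TVLabeled l v) -> force S m pc th (unl e) S m (pc `|` l) v.
Proof. by move=> He; apply/force_run/run_unlabel. Qed.

Lemma force_bnd S m pc th e1 a e2 S1 m1 pc1 w S2 m2 pc2 v :
  force S m pc th e1 S1 m1 pc1 w ->
  force S1 m1 pc1 (TECons (TAux a) w th) e2 S2 m2 pc2 v ->
  force S m pc th (bnd e1 a e2) S2 m2 pc2 v.
Proof. by move=> He1 He2; apply/force_run/run_bind; eassumption. Qed.

Lemma force_W S m pc th th' e S' m' pc' v :
  force S m pc th' e S' m' pc' v -> tremove aux_vars th = th' ->
  force S m pc th (W e) S' m' pc' v.
Proof. by inversion 1 => Hth; apply: force_intro; [constructor; rewrite Hth|]; eassumption. Qed.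

Lemma force_app S m pc th e1 e2 x e th' w S' m' pc' v :
  peval th e1 (TVClos x e th') -> peval th e2 w ->
  force S m pc (TECons x w th') e S' m' pc' v ->
  force S m pc th (TApp e1 e2) S' m' pc' v.
Proof. by move=> He1 He2; inversion 1; apply: force_intro; [apply: pe_app|]; eassumption. Qed.

Lemma force_case_inl S m pc th e x e1 e2 w S' m' pc' v :
  peval th e (TVInl w) -> force S m pc (TECons x w th) e1 S' m' pc' v ->
  force S m pc th (TCase e x e1 e2) S' m' pc' v.
Proof. by move=> He; inversion 1; apply: force_intro; [apply: pe_case_inl|]; eassumption. Qed.

Lemma force_case_inr S m pc th e x e1 e2 w S' m' pc' v :
  peval th e (TVInr w) -> force S m pc (TECons x w th) e2 S' m' pc' v ->
  force S m pc th (TCase e x e1 e2) S' m' pc' v.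
Proof. by move=> He; inversion 1; apply: force_intro; [apply: pe_case_inr|]; eassumption. Qed.

End DerivedForcing.

Section Translation.
Variables (d : Order.disp_t) (L : latticeType d).
Local Open Scope order_scope.
Implicit Types (S : tstore L) (m : theap L) (pc l : L) (th : env L) (w : tvalue L).

Lemma tremove_trans_env th : tremove aux_vars (trans_env th) = trans_env th.
Proof. by elim: th => //= x v th ->. Qed.

Lemma tenv_lookup_trans_env th x v :
  env_lookup th x = Some v -> tenv_lookup (trans_env th) (TSrc x) = Some (trans_val v).
Proof. by elim: th => //= y w th IH; case: (Nat.eqb x y) => // -[->]. Qed.

Lemma trans_store_upd (S : store L) l X :
  trans_store (upd S l X) = upd (trans_store S) l (map (@trans_raw d L) X).
Proof. by apply: functional_extensionality => l'; rewrite /trans_store /upd; case: (l' == l). Qed.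

Ltac solve_peval := repeat first [apply: pe_var; reflexivity | econstructor].
Ltac wken H := apply: (force_W H); by rewrite /= ?tremove_trans_env.

Lemma force_trans_var S m pc th x r l :
  env_lookup th x = Some (Val r l) ->
  force S m pc (trans_env th) (trans (EVar L x)) S m pc (TVLabeled (l `|` pc) (trans_raw r)).
Proof.
move=> Hx; rewrite joinC; apply/force_tl/force_unl/pe_var.
exact: tenv_lookup_trans_env Hx.
Qed.

Lemma force_trans_app S m pc th e1 e2 S1 m1 x eb thb l S2 m2 w S3 m3 lv r :
  pc `|` l <= lv ->
  force S m pc (trans_env th) (trans e1) S1 m1 pc (TVLabeled l (TVClos x eb thb)) ->
  force S1 m1 pc (trans_env th) (trans e2) S2 m2 pc w ->
  force S2 m2 (pc `|` l) (TECons x w thb) eb S3 m3 (pc `|` l) (TVLabeled lv r) ->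
  force S m pc (trans_env th) (trans (EApp e1 e2)) S3 m3 pc (TVLabeled lv r).
Proof.
move=> Hlv He1 He2 Hb; rewrite -(join_r Hlv); apply: force_tl.
apply: force_bnd; first wken He1.
apply: force_bnd; first wken He2.
apply: force_bnd; first by apply: force_unl; solve_peval.
apply: force_bnd; first by apply: (force_app _ _ Hb); solve_peval.
by apply: force_unl; solve_peval.
Qed.


Lemma force_trans_inl S m pc th e S' m' w :
  force S m pc (trans_env th) (trans e) S' m' pc w ->
  force S m pc (trans_env th) (trans (EInl e)) S' m' pc (TVLabeled pc (TVInl w)).
Proof.
move=> He; apply: force_tl; apply: force_bnd; first wken He.
by apply: force_ret; solve_peval.
Qed.

Lemma force_trans_inr S m pc th e S' m' w :
  force S m pc (trans_env th) (trans e) S' m' pc w ->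
  force S m pc (trans_env th) (trans (EInr e)) S' m' pc (TVLabeled pc (TVInr w)).
Proof.
move=> He; apply: force_tl; apply: force_bnd; first wken He.
by apply: force_ret; solve_peval.
Qed.

Lemma force_trans_pair S m pc th e1 e2 S1 m1 w1 S2 m2 w2 :
  force S m pc (trans_env th) (trans e1) S1 m1 pc w1 ->
  force S1 m1 pc (trans_env th) (trans e2) S2 m2 pc w2 ->
  force S m pc (trans_env th) (trans (EPair e1 e2)) S2 m2 pc (TVLabeled pc (TVPair w1 w2)).
Proof.
move=> He1 He2; apply: force_tl.
apply: force_bnd; first wken He1.
apply: force_bnd; first wken He2.
by apply: force_ret; solve_peval.
Qed.

Lemma force_trans_case_inl S m pc th e x e1 e2 S1 m1 l w S2 m2 lv r :
  pc `|` l <= lv ->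
  force S m pc (trans_env th) (trans e) S1 m1 pc (TVLabeled l (TVInl w)) ->
  force S1 m1 (pc `|` l) (TECons (TSrc x) w (trans_env th)) (trans e1)
        S2 m2 (pc `|` l) (TVLabeled lv r) ->
  force S m pc (trans_env th) (trans (ECase e x e1 e2)) S2 m2 pc (TVLabeled lv r).
Proof.
move=> Hlv He Hb; rewrite -(join_r Hlv); apply: force_tl.
apply: force_bnd; first wken He.
apply: force_bnd; first by apply: force_unl; solve_peval.
apply: force_bnd; first by apply: force_case_inl; [solve_peval | wken Hb].
by apply: force_unl; solve_peval.
Qed.

Lemma force_trans_case_inr S m pc th e x e1 e2 S1 m1 l w S2 m2 lv r :
  pc `|` l <= lv ->
  force S m pc (trans_env th) (trans e) S1 m1 pc (TVLabeled l (TVInr w)) ->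
  force S1 m1 (pc `|` l) (TECons (TSrc x) w (trans_env th)) (trans e2)
        S2 m2 (pc `|` l) (TVLabeled lv r) ->
  force S m pc (trans_env th) (trans (ECase e x e1 e2)) S2 m2 pc (TVLabeled lv r).
Proof.
move=> Hlv He Hb; rewrite -(join_r Hlv); apply: force_tl.
apply: force_bnd; first wken He.
apply: force_bnd; first by apply: force_unl; solve_peval.
apply: force_bnd; first by apply: force_case_inr; [solve_peval | wken Hb].
by apply: force_unl; solve_peval.
Qed.

Lemma force_trans_fst S m pc th e S' m' l l1 w1 w2 :
  pc <= l ->
  force S m pc (trans_env th) (trans e) S' m' pc (TVLabeled l (TVPair (TVLabeled l1 w1) w2)) ->
  force S m pc (trans_env th) (trans (EFst e)) S' m' pc (TVLabeled (l1 `|` l) w1).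
Proof.
move=> Hl He; have -> : l1 `|` l = pc `|` l `|` l1 by rewrite (join_r Hl) joinC.
apply: force_tl; apply: force_bnd; first wken He.
apply: force_bnd; first by apply: force_unl; solve_peval.
by apply: force_unl; solve_peval.
Qed.

Lemma force_trans_snd S m pc th e S' m' l l2 w1 w2 :
  pc <= l ->
  force S m pc (trans_env th) (trans e) S' m' pc (TVLabeled l (TVPair w1 (TVLabeled l2 w2))) ->
  force S m pc (trans_env th) (trans (ESnd e)) S' m' pc (TVLabeled (l2 `|` l) w2).
Proof.
move=> Hl He; have -> : l2 `|` l = pc `|` l `|` l2 by rewrite (join_r Hl) joinC.
apply: force_tl; apply: force_bnd; first wken He.
apply: force_bnd; first by apply: force_unl; solve_peval.
by apply: force_unl; solve_peval.
Qed.

Lemma force_trans_labelOf S m pc th e S' m' l w :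
  pc <= l ->
  force S m pc (trans_env th) (trans e) S' m' pc (TVLabeled l w) ->
  force S m pc (trans_env th) (trans (ELabelOf e)) S' m' pc (TVLabeled l (TVLab l)).
Proof.
move=> Hl He; rewrite -{1}(join_r Hl); apply: force_tl.
apply: force_bnd; first wken He.
by apply/force_run/run_labelof; solve_peval.
Qed.

Lemma force_trans_leq S m pc th e1 e2 S1 m1 l1 l1' S2 m2 l2 l2' :
  pc <= l1' ->
  force S m pc (trans_env th) (trans e1) S1 m1 pc (TVLabeled l1' (TVLab l1)) ->
  force S1 m1 pc (trans_env th) (trans e2) S2 m2 pc (TVLabeled l2' (TVLab l2)) ->
  force S m pc (trans_env th) (trans (ELeq e1 e2)) S2 m2 pc
        (TVLabeled (l1' `|` l2')
           ((if l1 <= l2 then @TVInl d L else @TVInr d L) (TVLabeled pc (TVUnit L)))).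
Proof.
move=> Hl He1 He2; rewrite -{1}(join_r Hl); apply: force_tl.
apply: force_bnd; first wken He1.
apply: force_bnd; first wken He2.
apply: force_bnd; first by apply: force_W; [apply: force_tl; apply: force_ret; constructor|].
apply: force_bnd; first by apply: force_unl; solve_peval.
apply: force_bnd; first by apply: force_unl; solve_peval.
apply: force_ret; case: ifP => Hle.
- by apply: pe_case_inl; [apply: pe_leq_true Hle|]; solve_peval.
- by apply: pe_case_inr; [apply: pe_leq_false (negbT Hle)|]; solve_peval.
Qed.


Lemma force_trans_taint S m pc th e1 e2 S1 m1 l l' S2 m2 lv r :
  pc <= l' -> l' <= l -> l <= lv ->
  force S m pc (trans_env th) (trans e1) S1 m1 pc (TVLabeled l' (TVLab l)) ->
  force S1 m1 l (trans_env th) (trans e2) S2 m2 l (TVLabeled lv r) ->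
  force S m pc (trans_env th) (trans (ETaint e1 e2)) S2 m2 pc (TVLabeled lv r).
Proof.
move=> Hl' Hl Hlv He1 He2; rewrite -(join_r Hlv); apply: force_tl.
apply: force_bnd; first wken He1.
apply: force_bnd; first by apply: force_unl; solve_peval.
apply: force_bnd; first by apply/force_run/run_taint; solve_peval.
rewrite (join_r Hl') (join_r Hl).
apply: force_bnd; first wken He2.
by apply: force_unl; solve_peval.
Qed.

Lemma force_trans_newI S m pc th e (S' : store L) m' r l n X :
  pc <= l ->
  force S m pc (trans_env th) (trans e) (trans_store S') m' pc (TVLabeled l (trans_raw r)) ->
  n = size (S' l) -> list_set (S' l) n r = Some X ->
  force S m pc (trans_env th) (trans (ENew KI e)) (trans_store (upd S' l X)) m' pc
        (TVLabeled pc (TVRefI n l)).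
Proof.
move=> Hl He Hn HX; rewrite trans_store_upd; apply: force_tl.
apply: force_bnd; first wken He.
apply/force_run/run_newI; [solve_peval | exact: Hl | by rewrite size_map |].
exact: list_set_map HX.
Qed.

Lemma force_trans_readI S m pc th e (S' : store L) m' n l l' r :
  pc <= l' ->
  force S m pc (trans_env th) (trans e) (trans_store S') m' pc (TVLabeled l' (TVRefI n l)) ->
  list_nth (S' l) n = Some r ->
  force S m pc (trans_env th) (trans (ERead KI e)) (trans_store S') m' pc
        (TVLabeled (l `|` l') (trans_raw r)).
Proof.
move=> Hl' He Hr; have -> : l `|` l' = pc `|` l' `|` l by rewrite (join_r Hl') joinC.
apply: force_tl; apply: force_bnd; first wken He.
apply: force_bnd; first by apply: force_unl; solve_peval.
by apply/force_run/run_readI; [solve_peval | exact: list_nth_map Hr].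
Qed.

Lemma force_trans_writeI S m pc th e1 e2 S1 m1 n l l1 (S2 : store L) m2 r l2 X :
  pc <= l1 ->
  force S m pc (trans_env th) (trans e1) S1 m1 pc (TVLabeled l1 (TVRefI n l)) -> l1 <= l ->
  force S1 m1 pc (trans_env th) (trans e2) (trans_store S2) m2 pc (TVLabeled l2 (trans_raw r)) ->
  l2 <= l -> list_set (S2 l) n r = Some X ->
  force S m pc (trans_env th) (trans (EWrite KI e1 e2)) (trans_store (upd S2 l X)) m2 pc
        (TVLabeled pc (TVUnit L)).
Proof.
move=> Hl1 He1 Hl1l He2 Hl2 HX; rewrite trans_store_upd.
apply: force_bnd; last by apply: force_W; [apply: force_tl; apply: force_ret; constructor|].
apply: force_tl; apply: force_bnd; first wken He1.
apply: force_bnd; first wken He2.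
apply: force_bnd; first by apply: force_unl; solve_peval.
apply/force_run/run_writeI; [solve_peval | solve_peval | exact: Hl2 | |].
- by rewrite leUx Hl1l (le_trans Hl1 Hl1l).
- exact: list_set_map HX.
Qed.

Lemma force_trans_labelOfRefI S m pc th e S' m' n l l' :
  pc <= l' ->
  force S m pc (trans_env th) (trans e) S' m' pc (TVLabeled l' (TVRefI n l)) ->
  force S m pc (trans_env th) (trans (ELabelOfRef KI e)) S' m' pc (TVLabeled (l `|` l') (TVLab l)).
Proof.
move=> Hl' He; have -> : l `|` l' = pc `|` l' `|` l by rewrite (join_r Hl') joinC.
apply: force_tl; apply: force_bnd; first wken He.
apply: force_bnd; first by apply: force_unl; solve_peval.
by apply/force_run/run_labelofrefI; solve_peval.
Qed.

Lemma force_trans_newS S m pc th e S' (m' : heap L) r l n (m'' : heap L) :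
  pc <= l ->
  force S m pc (trans_env th) (trans e) S' (trans_heap m') pc (TVLabeled l (trans_raw r)) ->
  n = size m' -> list_set m' n (Val r l) = Some m'' ->
  force S m pc (trans_env th) (trans (ENew KS e)) S' (trans_heap m'') pc
        (TVLabeled pc (TVRefS L n)).
Proof.
move=> Hl He Hn Hm; apply: force_tl; apply: force_bnd; first wken He.
apply/force_run/run_newS; [solve_peval | exact: Hl | by rewrite size_map |].
exact: list_set_map Hm.
Qed.

Lemma force_trans_readS S m pc th e S' (m' : heap L) n l r l' :
  pc <= l ->
  force S m pc (trans_env th) (trans e) S' (trans_heap m') pc (TVLabeled l (TVRefS L n)) ->
  list_nth m' n = Some (Val r l') ->
  force S m pc (trans_env th) (trans (ERead KS e)) S' (trans_heap m') pc
        (TVLabeled (l `|` l') (trans_raw r)).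
Proof.
move=> Hl He Hr; rewrite -{1}(join_r Hl); apply: force_tl.
apply: force_bnd; first wken He.
apply: force_bnd; first by apply: force_unl; solve_peval.
by apply/force_run/run_readS; [solve_peval | exact: (list_nth_map (@trans_val d L) Hr)].
Qed.

Lemma force_trans_labelOfRefS S m pc th e S' (m' : heap L) n l1 r l2 :
  pc <= l1 ->
  force S m pc (trans_env th) (trans e) S' (trans_heap m') pc (TVLabeled l1 (TVRefS L n)) ->
  list_nth m' n = Some (Val r l2) ->
  force S m pc (trans_env th) (trans (ELabelOfRef KS e)) S' (trans_heap m') pc
        (TVLabeled (l1 `|` l2) (TVLab l2)).
Proof.
move=> Hl1 He Hr; rewrite -{1}(join_r Hl1); apply: force_tl.
apply: force_bnd; first wken He.
apply: force_bnd; first by apply: force_unl; solve_peval.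
by apply/force_run/run_labelofrefS; [solve_peval | exact: (list_nth_map (@trans_val d L) Hr)].
Qed.

Lemma force_trans_writeS S m pc th e1 e2 S1 m1 n l S2 (m2 : heap L) r2 l2 r1 l1 (m3 : heap L) :
  pc <= l ->
  force S m pc (trans_env th) (trans e1) S1 m1 pc (TVLabeled l (TVRefS L n)) ->
  force S1 m1 pc (trans_env th) (trans e2) S2 (trans_heap m2) pc (TVLabeled l2 (trans_raw r2)) ->
  list_nth m2 n = Some (Val r1 l1) -> l <= l1 ->
  list_set m2 n (Val r2 (l2 `|` l)) = Some m3 ->
  force S m pc (trans_env th) (trans (EWrite KS e1 e2)) S2 (trans_heap m3) pc
        (TVLabeled pc (TVUnit L)).
Proof.
move=> Hl He1 He2 Hr1 Hll1 Hm.
apply: force_bnd; last by apply: force_W; [apply: force_tl; apply: force_ret; constructor|].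
apply: force_tl; apply: force_bnd; first wken He1.
apply: force_bnd; first wken He2.
apply: force_bnd; first by apply: force_unl; solve_peval.
rewrite (join_r Hl); apply/force_run/run_writeS; [solve_peval | solve_peval | | exact: Hll1 |].
- exact: (list_nth_map (@trans_val d L) Hr1).
- by rewrite joinC; apply: (list_set_map (@trans_val d L) Hm).
Qed.


Lemma trans_simulation (S S' : store L) (m m' : heap L) th pc e v :
  eval S m th pc e S' m' v ->
  force (trans_store S) (trans_heap m) pc (trans_env th) (trans e)
        (trans_store S') (trans_heap m') pc (trans_val v).
Proof.
elim=> {S m th pc e S' m' v}.
- by move=> S m th pc x [r l] Hx; apply: force_trans_var.
- by move=> *; apply/force_tl/force_ret; constructor.
- by move=> *; apply/force_tl/force_ret; constructor.
- by move=> *; apply/force_tl/force_ret; constructor.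
- by move=> *; apply/force_tl/force_run/run_getlabel.
- move=> S m th pc e1 e2 S1 m1 x e th' l S2 m2 v2 S3 m3 [r lv] _ IH1 _ IH2 H3 IH3.
  exact: force_trans_app (eval_pc_le_label H3) IH1 IH2 IH3.
- by move=> *; apply: force_trans_inl.
- by move=> *; apply: force_trans_inr.
- move=> S m th pc e x e1 e2 S1 m1 v1 l S2 m2 [r lv] _ IH H IHb.
  exact: force_trans_case_inl (eval_pc_le_label H) IH IHb.
- move=> S m th pc e x e1 e2 S1 m1 v1 l S2 m2 [r lv] _ IH H IHb.
  exact: force_trans_case_inr (eval_pc_le_label H) IH IHb.
- move=> S m th pc e1 e2 S1 m1 v1 S2 m2 v2 _ IH1 _ IH2.
  exact: force_trans_pair IH1 IH2.
- move=> S m th pc e S' m' [r1 l1] v2 l H IH.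
  exact: force_trans_fst (eval_pc_le_label H) IH.
- move=> S m th pc e S' m' v1 [r2 l2] l H IH.
  exact: force_trans_snd (eval_pc_le_label H) IH.
- move=> S m th pc e S' m' r l H IH.
  exact: force_trans_labelOf (eval_pc_le_label H) IH.
- move=> S m th pc e1 e2 S1 m1 l1 l1' S2 m2 l2 l2' H1 IH1 _ IH2 Hle.
  by move: (force_trans_leq (eval_pc_le_label H1) IH1 IH2); rewrite Hle.
- move=> S m th pc e1 e2 S1 m1 l1 l1' S2 m2 l2 l2' H1 IH1 _ IH2 Hle.
  by move: (force_trans_leq (eval_pc_le_label H1) IH1 IH2); rewrite (negbTE Hle).
- move=> S m th pc e1 e2 S1 m1 l l' S2 m2 [r lv] H1 IH1 Hl H2 IH2.
  exact: force_trans_taint (eval_pc_le_label H1) Hl (eval_pc_le_label H2) IH1 IH2.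
- move=> S m th pc e S' m' r l n X H IH.
  exact: force_trans_newI (eval_pc_le_label H) IH.
- move=> S m th pc e S' m' n l l' r H IH.
  exact: force_trans_readI (eval_pc_le_label H) IH.
- move=> S m th pc e1 e2 S1 m1 n l l1 S2 m2 r l2 X H1 IH1 Hl1 _ IH2.
  exact: force_trans_writeI (eval_pc_le_label H1) IH1 Hl1 IH2.
- move=> S m th pc e S' m' n l l' H IH.
  exact: force_trans_labelOfRefI (eval_pc_le_label H) IH.
- move=> S m th pc e S' m' [r l] n m'' H IH.
  exact: force_trans_newS (eval_pc_le_label H) IH.
- move=> S m th pc e S' m' n l r l' H IH.
  exact: force_trans_readS (eval_pc_le_label H) IH.
- move=> S m th pc e S' m' n l1 r l2 H IH.
  exact: force_trans_labelOfRefS (eval_pc_le_label H) IH.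
- move=> S m th pc e1 e2 S1 m1 n l S2 m2 r2 l2 r1 l1 m3 H1 IH1 _ IH2.
  exact: force_trans_writeS (eval_pc_le_label H1) IH1 IH2.
Qed.

End Translation.

Theorem mainTheorem5 (d : Order.disp_t) (L : latticeType d)
  (e : expr L) (S S' : store L) (m m' : heap L) (pc : L)
  (th : env L) (v : value L) :
  well_typed e ->
  eval S m th pc e S' m' v ->
  force (trans_store S) (trans_heap m) pc (trans_env th) (trans e)
        (trans_store S') (trans_heap m') pc (trans_val v).
Proof. by move=> _; apply: trans_simulation. Qed.
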